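(* Let $v,k$ be positive integers with $k\mid v$ and $v\mid k^2$, and put $\lambda=k^2/v$. In $\mathbb{Z}_v$ let $A_X=\{0,1,\dots,k-1\}$ and $A_Y=\{ak, ak+1,\dots, ak+\lambda-1 : a=0,1,\dots,\tfrac{v}{k}-1\}$. Then (i) $\{A_X,A_Y\}$ is a $(v,2,k,\lambda)$-PSEDF in $\mathbb{Z}_v$, and (ii) $\{A_X,A_Y\}$ is a non-disjoint $(v,2,k,\lambda)$-SEDF in $\mathbb{Z}_v$.
   Context: Groups are written additively. For subsets $A,B$ of a group $G$, $\Delta(A,B)$ is the multiset $\{a-b:a\in A,b\in B\}$ and $\lambda G$ is the multiset with each element of $G$ exactly $\lambda$ times. For $G$ of order $v$ and $m>1$, a family of $k$-subsets $\{A_1,\dots,A_m\}$ of $G$ is a $(v,m,k,\lambda)$-PSEDF if $\Delta(A_i,A_j)=\lambda G$ for every $i\neq j$; it is a non-disjoint $(v,m,k,\lambda)$-SEDF if for each $i$ the multiset union $\bigcup_{j\neq i}\Delta(A_i,A_j)$ equals $\lambda G$. The sets need not be disjoint. *)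

From mathcomp Require Import all_boot all_order all_algebra.
Set Implicit Arguments. Unset Strict Implicit. Unset Printing Implicit Defensive.
Import GRing.Theory.
Local Open Scope ring_scope.

(* Multiplicity of g in the multiset Delta(A,B) = {a - b : a in A, b in B}. *)
Definition delta_mult (G : finZmodType) (A B : {set G}) (g : G) : nat :=
  #|[set p in setX A B | p.1 - p.2 == g]|.

Definition is_PSEDF (G : finZmodType) (v m k lam : nat) (F : 'I_m -> {set G}) :=
  [/\ #|G| = v, (1 < m)%N, (forall i, #|F i| = k) &
      forall i j, i != j -> forall g : G, delta_mult (F i) (F j) g = lam].

Definition is_SEDF (G : finZmodType) (v m k lam : nat) (F : 'I_m -> {set G}) :=
  [/\ #|G| = v, (1 < m)%N, (forall i, #|F i| = k) &
      forall i (g : G), (\sum_(j < m | j != i) delta_mult (F i) (F j) g)%N = lam].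

(* Z_v for v > 0, realised as 'I_(v.-1.+1) (so that Z_1 is the trivial group,
   unlike mathcomp's 'Z_1). *)
Definition Zv (v : nat) : finZmodType := 'I_(v.-1.+1).

Definition AX (v k : nat) : {set Zv v} := [set (inZp i : Zv v) | i : 'I_k].

Definition AY (v k : nat) : {set Zv v} :=
  [set (inZp (a * k + j) : Zv v) | a : 'I_(v %/ k), j : 'I_(k ^ 2 %/ v)].

Definition fam2 (v k : nat) : 'I_2 -> {set Zv v} :=
  fun i => if i == ord0 then AX v k else AY v k.

Arguments is_PSEDF {G} v m k lam F.
Arguments is_SEDF {G} v m k lam F.

From mathcomp Require Import all_boot all_order all_algebra.
Import GRing.Theory.

(* Since k divides v, reduction modulo k is well defined on Z_v.  A_X is a
   complete system of residues modulo k, and A_Y is exactly the set of elements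
   whose residue modulo k lies in [0, lam).  Translation by h permutes the
   residues, so exactly lam elements x of A_X have x + h in A_Y: this is the
   multiplicity of -h in Delta(A_X, A_Y) and of h in Delta(A_Y, A_X).  For a
   pair of sets each SEDF sum has a single term, so the PSEDF is an SEDF. *)

Lemma widen_ord_inj {m N : nat} (le_mN : m <= N) : injective (widen_ord le_mN).
Proof. by move=> i j /(congr1 val) eq_ij; apply: val_inj. Qed.

Lemma card_ord_ltn {N m : nat} : m <= N -> #|[set i : 'I_N | i < m]| = m.
Proof.
move=> le_mN; rewrite -[RHS]card_ord -(card_imset _ (widen_ord_inj le_mN)).
apply: eq_card => i; rewrite inE; apply/idP/imsetP => [i_lt | [j _ ->]].
  by exists (Ordinal i_lt) => //; apply: val_inj.
by rewrite /= ltn_ord.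
Qed.

Section DeltaMult.
Variable G : finZmodType.
Implicit Types (A B : {set G}) (g : G).
Local Open Scope ring_scope.

Lemma delta_multE A B g : delta_mult A B g = #|[set a in A | a - g \in B]|.
Proof.
have inj_graph : injective (fun a => (a, a - g)) by move=> a b [].
rewrite /delta_mult -(card_imset _ inj_graph); apply: eq_card => -[a b].
rewrite !inE /=; apply/idP/imsetP => [/andP[/andP[aA bB] /eqP <-] | [c]].
  by exists a; rewrite ?inE opprB addrC subrK // aA.
by rewrite inE => /andP[cA cB] [-> ->]; rewrite cA cB opprB addrC subrK /=.
Qed.

Lemma delta_mult_swap A B g : delta_mult A B g = delta_mult B A (- g).
Proof.
have swapK : involutive (fun p : G * G => (p.2, p.1)) by case.
rewrite /delta_mult -(card_imset _ (inv_inj swapK)) (can_imset_pre _ swapK).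
apply: eq_card => -[a b].
by rewrite !inE /= -opprB eqr_oppLR [(b \in A) && _]andbC.
Qed.
End DeltaMult.

Section ResidueBlocks.
Variables n k : nat.
Local Notation v := n.+1.
Local Notation lam := (k ^ 2 %/ v).
Hypotheses (k_gt0 : 0 < k) (k_dvd_v : k %| v).

Lemma leq_k_v : k <= v.
Proof. exact: dvdn_leq. Qed.

Lemma leq_lam_k : lam <= k.
Proof. by have := leq_div2l (k ^ 2) k_gt0 leq_k_v; rewrite -mulnn mulnK. Qed.

Lemma ltn_block {a j : nat} : a < v %/ k -> j < k -> a * k + j < v.
Proof.
move=> lt_a lt_j; rewrite -(divnK k_dvd_v).
apply: (@leq_trans (a.+1 * k)); first by rewrite mulSnr ltn_add2l.
by rewrite leq_mul2r lt_a orbT.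
Qed.

Lemma mem_AX (x : Zv v) : (x \in AX v k) = (x < k).
Proof.
apply/imsetP/idP => [[i _ ->] | lt_x].
  by rewrite /= modn_small ?ltn_ord // (leq_trans (ltn_ord i) leq_k_v).
by exists (Ordinal lt_x) => //; apply: val_inj; rewrite /= modn_small.
Qed.

Lemma mem_AY (y : Zv v) : (y \in AY v k) = (y %% k < lam).
Proof.
apply/imset2P/idP => [[a j _ _ ->] | lt_y].
  have lt_j := leq_trans (ltn_ord j) leq_lam_k.
  by rewrite /= (modn_small (ltn_block (ltn_ord a) lt_j)) modnMDl modn_small.
have lt_y_div : y %/ k < v %/ k by rewrite ltn_divLR // divnK.
exists (Ordinal lt_y_div) (Ordinal lt_y) => //; apply: val_inj.
by rewrite /= -divn_eq modn_small.
Qed.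

Lemma card_AX : #|AX v k| = k.
Proof.
rewrite -[RHS](card_ord_ltn leq_k_v); apply: eq_card => x.
by rewrite mem_AX inE.
Qed.

Lemma card_AY : v %| k ^ 2 -> #|AY v k| = k.
Proof.
move=> v_dvd_k2.
pose block (a : 'I_(v %/ k)) (j : 'I_lam) : Zv v := inZp (a * k + j).
have -> : AY v k = uncurry block @: setT.
  by apply/setP => y; apply/imset2P/imsetP => [[a j _ _ ->] | [[a j] _ ->]];
    [exists (a, j) | exists a j].
rewrite card_imset; last first.
  move=> [a j] [b i] /(congr1 val) /=.
  have [lt_j lt_i] := (leq_trans (ltn_ord j) leq_lam_k, leq_trans (ltn_ord i) leq_lam_k).
  rewrite !modn_small ?ltn_block // => /(congr1 (edivn^~ k)).
  by rewrite !edivn_eq // => -[/val_inj-> /val_inj->].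
rewrite cardsT card_prod !card_ord; apply/eqP; rewrite -(eqn_pmul2r k_gt0).
by rewrite mulnAC divnK // mulnC divnK // mulnn.
Qed.

Lemma card_AX_shift_AY (h : Zv v) :
  #|[set x in AX v k | (x + h)%R \in AY v k]| = lam.
Proof.
pose shift (i : 'I_k) : 'I_k := Ordinal (ltn_pmod (i + h) k_gt0).
have shift_inj : injective shift.
  move=> i j /(congr1 val) /eqP; rewrite /= eqn_modDr !modn_small //.
  by move/eqP; apply: val_inj.
have -> : [set x in AX v k | (x + h)%R \in AY v k] =
    widen_ord leq_k_v @: (shift @^-1: [set j : 'I_k | j < lam]).
  apply/setP => x; rewrite !inE mem_AX mem_AY /= modn_dvdm //.
  apply/andP/imsetP => [[lt_x lt_xh] | [i]].
    by exists (Ordinal lt_x); rewrite ?inE //; apply: val_inj.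
  by rewrite !inE => lt_ih ->; rewrite /= ltn_ord.
by rewrite card_imset ?card_preimset ?card_ord_ltn ?leq_lam_k //; apply: widen_ord_inj.
Qed.

Lemma delta_mult_AX_AY (g : Zv v) : delta_mult (AX v k) (AY v k) g = lam.
Proof. by rewrite delta_multE card_AX_shift_AY. Qed.

End ResidueBlocks.

Lemma PSEDF_SEDF (G : finZmodType) v m k lam (F : 'I_m -> {set G}) :
  is_PSEDF v m k lam F -> is_SEDF v m k (m.-1 * lam) F.
Proof.
case=> card_G lt1m card_F delta_F; split=> // i g.
rewrite (eq_bigr (fun=> lam)) => [|j ne_ji].
  by rewrite sum_nat_const cardC1 card_ord.
by apply: delta_F; rewrite eq_sym.
Qed.

Lemma is_PSEDF_pair (G : finZmodType) v k lam (F : 'I_2 -> {set G}) :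
    #|G| = v -> (forall i, #|F i| = k) ->
    (forall g, delta_mult (F ord0) (F ord_max) g = lam) ->
  is_PSEDF v 2 k lam F.
Proof.
move=> card_G card_F delta_F; split=> // i j.
have ord2 (l : 'I_2) : l = ord0 \/ l = ord_max.
  by case: l => [[|[|//]] ?]; [left | right]; apply: val_inj.
case: (ord2 i) (ord2 j) => -> [] -> // _ g.
by rewrite delta_mult_swap delta_F.
Qed.

Theorem theorem3p1 (v k : nat) :
  (0 < v)%N -> (0 < k)%N -> (k %| v)%N -> (v %| k ^ 2)%N ->
  is_PSEDF v 2 k (k ^ 2 %/ v) (fam2 v k) /\ is_SEDF v 2 k (k ^ 2 %/ v) (fam2 v k).
Proof.
case: v => // n _ k_gt0 k_dvd_v v_dvd_k2.
have card_fam2 i : #|fam2 n.+1 k i| = k.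
  by rewrite /fam2; case: ifP => _; [exact: card_AX | exact: card_AY].
have PSEDF_fam2 : is_PSEDF n.+1 2 k (k ^ 2 %/ n.+1) (fam2 n.+1 k).
  apply: is_PSEDF_pair card_fam2 _; [exact: card_ord | exact: delta_mult_AX_AY].
by split; rewrite // -[k ^ 2 %/ _]mul1n; apply: PSEDF_SEDF.
Qed.
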